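(* Let $\mathbf A$ be a WD-algebra, $P$ a prime filter of $\mathbf A$ and $a,b\in A$. Then $a\leftarrow b\in P$ if and only if there exists a prime filter $Q$ of $\mathbf A$ such that $(P,Q)\in S_{\mathbf A}$, $a\in Q$ and $b\notin Q$.
   Context: A WD-algebra is an algebra $(A,\wedge,\vee,\leftarrow,0,1)$ such that $(A,\wedge,\vee,0,1)$ is a bounded distributive lattice and for all $a,b,c\in A$: $a\leftarrow a=0$; $(a\vee b)\leftarrow c=(a\leftarrow c)\vee(b\leftarrow c)$; $a\leftarrow(b\wedge c)=(a\leftarrow b)\vee(a\leftarrow c)$; $a\leftarrow c\le(a\leftarrow b)\vee(b\leftarrow c)$. For a prime filter $P$ and a filter $Q$ of $\mathbf A$, $(P,Q)\in S_{\mathbf A}$ iff for all $a,b\in A$, $a\in Q$ and $b\notin Q$ imply $a\leftarrow b\in P$. *)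

From Stdlib Require Import Classical.

Record WDAlgebra := {
  carrier :> Type;
  meet : carrier -> carrier -> carrier;
  join : carrier -> carrier -> carrier;
  larr : carrier -> carrier -> carrier;
  bot : carrier;
  top : carrier;
  meet_comm : forall a b, meet a b = meet b a;
  join_comm : forall a b, join a b = join b a;
  meet_assoc : forall a b c, meet a (meet b c) = meet (meet a b) c;
  join_assoc : forall a b c, join a (join b c) = join (join a b) c;
  meet_absorb : forall a b, meet a (join a b) = a;
  join_absorb : forall a b, join a (meet a b) = a;
  meet_join_distr : forall a b c, meet a (join b c) = join (meet a b) (meet a c);
  meet_top : forall a, meet a top = a;
  join_bot : forall a, join a bot = a;
  larr_self : forall a, larr a a = bot;
  larr_join_l : forall a b c, larr (join a b) c = join (larr a c) (larr b c);
  larr_meet_r : forall a b c, larr a (meet b c) = join (larr a b) (larr a c);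
  larr_trans : forall a b c,
      meet (larr a c) (join (larr a b) (larr b c)) = larr a c
}.

Definition le (A : WDAlgebra) (a b : A) : Prop := meet A a b = a.

Definition is_filter (A : WDAlgebra) (F : A -> Prop) : Prop :=
  F (top A) /\
  (forall a b : A, F a -> le A a b -> F b) /\
  (forall a b : A, F a -> F b -> F (meet A a b)).

Definition is_prime_filter (A : WDAlgebra) (F : A -> Prop) : Prop :=
  is_filter A F /\ ~ F (bot A) /\
  (forall a b : A, F (join A a b) -> F a \/ F b).

Definition S_rel (A : WDAlgebra) (P Q : A -> Prop) : Prop :=
  forall a b : A, Q a -> ~ Q b -> P (larr A a b).

(** For a prime filter [P], the relation [x R y := ~ P (x <- y)] is a preorder
    extending the lattice order and compatible with meets on the right and
    joins on the left.  If [a <- b] lies in [P], then [~ R a b], so the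
    [R]-upset of [a] is an [R]-closed filter avoiding [b]; a maximal such
    filter (Zorn) is prime, by the usual prime filter argument run with [R]
    in place of the order.  Closure under [R] is exactly [(P, Q) \in S_A]. *)

From Stdlib Require Import Classical.
From mathcomp Require classical_sets.

Section LatticeFacts.
Variable A : WDAlgebra.
Local Notation "x ∧ y" := (meet A x y) (at level 40, left associativity).
Local Notation "x ∨ y" := (join A x y) (at level 50, left associativity).
Local Notation "x ≤ y" := (le A x y) (at level 70).

Lemma meet_idem x : x ∧ x = x.
Proof.
  pose proof (meet_absorb A x (x ∧ x)) as H.
  rewrite (join_absorb A x x) in H. exact H.
Qed.

Lemma le_refl x : x ≤ x.
Proof. apply meet_idem. Qed.

Lemma le_trans x y z : x ≤ y -> y ≤ z -> x ≤ z.
Proof.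
  unfold le; intros Hxy Hyz. rewrite <- Hxy at 1. rewrite <- meet_assoc, Hyz. exact Hxy.
Qed.

Lemma meet_le_l x y : x ∧ y ≤ x.
Proof. unfold le. rewrite (meet_comm A x y), <- meet_assoc, meet_idem. reflexivity. Qed.

Lemma meet_le_r x y : x ∧ y ≤ y.
Proof. unfold le. rewrite <- meet_assoc, meet_idem. reflexivity. Qed.

Lemma le_meet c x y : c ≤ x -> c ≤ y -> c ≤ x ∧ y.
Proof. unfold le; intros Hx Hy. rewrite meet_assoc, Hx. exact Hy. Qed.

Lemma meet_le_meet_l x x' y : x ≤ x' -> x ∧ y ≤ x' ∧ y.
Proof.
  intro H. apply le_meet; [eapply le_trans; [apply meet_le_l | exact H] | apply meet_le_r].
Qed.

Lemma le_join_r x y : x ≤ y ∨ x.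
Proof. unfold le. rewrite join_comm. apply meet_absorb. Qed.

Lemma le_top x : x ≤ top A.
Proof. apply meet_top. Qed.

Lemma bot_le x : bot A ≤ x.
Proof.
  pose proof (meet_absorb A (bot A) x) as H.
  rewrite join_comm, join_bot in H. exact H.
Qed.

Lemma larr_antitone_r x w w' : w ≤ w' -> larr A x w' ≤ larr A x w.
Proof. unfold le; intro H. rewrite <- H at 1. rewrite larr_meet_r. apply le_join_r. Qed.

Lemma larr_le_bot x y : x ≤ y -> larr A x y ≤ bot A.
Proof. intro H. rewrite <- (larr_self A x). apply larr_antitone_r, H. Qed.

End LatticeFacts.

Section ClosedFilterSeparation.
Variable A : WDAlgebra.
Variable R : A -> A -> Prop.
Local Notation "x ∧ y" := (meet A x y) (at level 40, left associativity).
Local Notation "x ∨ y" := (join A x y) (at level 50, left associativity).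
Local Notation "x ≤ y" := (le A x y) (at level 70).

Hypothesis R_of_le : forall x y, x ≤ y -> R x y.
Hypothesis R_trans : forall x y z, R x y -> R y z -> R x z.
Hypothesis R_meet_r : forall h w w', R h w -> R h w' -> R h (w ∧ w').
Hypothesis R_join_l : forall h h' w, R h w -> R h' w -> R (h ∨ h') w.

Definition rel_closed (F : A -> Prop) : Prop := forall x y, F x -> R x y -> F y.

Lemma R_antitone_l h h' w : h' ≤ h -> R h w -> R h' w.
Proof. intros Hle Hhw. exact (R_trans _ _ _ (R_of_le _ _ Hle) Hhw). Qed.

Variables a b : A.

Definition separating (F : A -> Prop) : Prop :=
  is_filter A F /\ rel_closed F /\ F a /\ ~ F b.

Lemma separating_upset : ~ R a b -> separating (R a).
Proof.
  intro Hab. split; [split; [|split] | split; [|split]].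
  - apply R_of_le, le_top.
  - intros x y Hx Hle. exact (R_trans _ _ _ Hx (R_of_le _ _ Hle)).
  - apply R_meet_r.
  - intros x y Hx Hy. exact (R_trans _ _ _ Hx Hy).
  - apply R_of_le, le_refl.
  - exact Hab.
Qed.

Definition adjoin (F : A -> Prop) (y : A) : A -> Prop :=
  fun w => exists f, F f /\ R (f ∧ y) w.

Lemma adjoin_sub F y w : F w -> adjoin F y w.
Proof. intro Hw. exists w. split; [exact Hw | apply R_of_le, meet_le_l]. Qed.

Lemma adjoin_mem F y : F (top A) -> adjoin F y y.
Proof. intro Htop. exists (top A). split; [exact Htop | apply R_of_le, meet_le_r]. Qed.

Lemma adjoin_separating F y : separating F -> ~ adjoin F y b -> separating (adjoin F y).
Proof.
  intros [[Htop [_ Hmeet]] [_ [Ha _]]] Hb.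
  split; [split; [|split] | split; [|split]]; try exact Hb.
  - apply adjoin_sub, Htop.
  - intros x z [f [Hf Hfx]] Hle. exists f. split; [exact Hf|].
    exact (R_trans _ _ _ Hfx (R_of_le _ _ Hle)).
  - intros x z [f [Hf Hfx]] [f' [Hf' Hf'z]]. exists (f ∧ f'). split; [apply Hmeet; assumption|].
    apply R_meet_r.
    + eapply R_antitone_l; [apply meet_le_meet_l, meet_le_l | exact Hfx].
    + eapply R_antitone_l; [apply meet_le_meet_l, meet_le_r | exact Hf'z].
  - intros x z [f [Hf Hfx]] Hxz. exists f. split; [exact Hf | exact (R_trans _ _ _ Hfx Hxz)].
  - apply adjoin_sub, Ha.
Qed.

Definition maximal_separating (F : A -> Prop) : Prop :=
  separating F /\ forall B, classical_sets.proper F B -> ~ separating B.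

Lemma maximal_adjoin_mem_b F y : maximal_separating F -> ~ F y -> adjoin F y b.
Proof.
  intros [HF Hmax] Hy. apply NNPP; intro Hb.
  apply (Hmax (adjoin F y)); [|exact (adjoin_separating F y HF Hb)].
  split; [intros w; apply adjoin_sub|].
  intro Hsub. apply Hy, Hsub, adjoin_mem. apply HF.
Qed.

Lemma maximal_separating_prime F y z :
  maximal_separating F -> F (y ∨ z) -> F y \/ F z.
Proof.
  intros HFmax Hyz.
  destruct (classic (F y)) as [|Hy]; [now left|].
  destruct (classic (F z)) as [|Hz]; [now right|].
  destruct (maximal_adjoin_mem_b F y HFmax Hy) as [f [Hf Hfb]].
  destruct (maximal_adjoin_mem_b F z HFmax Hz) as [f' [Hf' Hf'b]].
  destruct HFmax as [[[_ [_ Hmeet]] [Hclosed [_ Hb]]] _].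
  exfalso. apply Hb, (Hclosed ((f ∧ f') ∧ (y ∨ z))); [apply Hmeet; [apply Hmeet|]; assumption|].
  rewrite meet_join_distr. apply R_join_l.
  - eapply R_antitone_l; [apply meet_le_meet_l, meet_le_l | exact Hfb].
  - eapply R_antitone_l; [apply meet_le_meet_l, meet_le_r | exact Hf'b].
Qed.

(* [Zorn_bigcup] also asks the union of the empty chain, i.e. the empty set, to qualify. *)
Definition empty_or_separating (X : A -> Prop) : Prop := (forall t, ~ X t) \/ separating X.

Lemma chain_union_empty_or_separating (C : (A -> Prop) -> Prop) :
  (forall X, C X -> empty_or_separating X) ->
  classical_sets.total_on C classical_sets.subset ->
  empty_or_separating (classical_sets.bigcup C (fun X => X)).
Proof.
  intros HC Htot.
  assert (Hmem : forall X t, C X -> X t -> separating X).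
  { intros X t CX Xt. destruct (HC X CX) as [Hempty|H]; [exfalso; exact (Hempty t Xt) | exact H]. }
  destruct (classic (exists X, C X /\ separating X)) as [[X0 [CX0 HX0]]|Hnone].
  - right. split; [split; [|split] | split; [|split]].
    + exists X0; [exact CX0 | apply HX0].
    + intros x y [X CX Xx] Hle. exists X; [exact CX|].
      destruct (Hmem X x CX Xx) as [[_ [Hup _]] _]. exact (Hup x y Xx Hle).
    + intros x y [X CX Xx] [Y CY Yy].
      destruct (Htot X Y CX CY) as [Hsub|Hsub].
      * exists Y; [exact CY|]. destruct (Hmem Y y CY Yy) as [[_ [_ Hmeet]] _].
        apply Hmeet; [apply Hsub|]; assumption.
      * exists X; [exact CX|]. destruct (Hmem X x CX Xx) as [[_ [_ Hmeet]] _].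
        apply Hmeet; [|apply Hsub]; assumption.
    + intros x y [X CX Xx] Hxy. exists X; [exact CX|].
      destruct (Hmem X x CX Xx) as [_ [Hclosed _]]. exact (Hclosed x y Xx Hxy).
    + exists X0; [exact CX0 | apply HX0].
    + intros [X CX Xb]. destruct (Hmem X b CX Xb) as [_ [_ [_ Hb]]]. exact (Hb Xb).
  - left. intros t [X CX Xt]. apply Hnone. exists X. split; [exact CX | exact (Hmem X t CX Xt)].
Qed.

Lemma exists_maximal_separating : ~ R a b -> exists F, maximal_separating F.
Proof.
  intro Hab.
  destruct (classical_sets.Zorn_bigcup chain_union_empty_or_separating)
    as [F [[Hempty|HF] Hmax]].
  - exfalso. apply (Hmax (R a)); [|right; exact (separating_upset Hab)].
    split; [intros t Ft; exfalso; exact (Hempty t Ft)|].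
    intro Hsub. apply (Hempty a), Hsub, R_of_le, le_refl.
  - exists F. split; [exact HF|]. intros B HFB HB. exact (Hmax B HFB (or_intror HB)).
Qed.

Theorem closed_prime_filter_separation :
  ~ R a b -> exists Q, is_prime_filter A Q /\ rel_closed Q /\ Q a /\ ~ Q b.
Proof.
  intro Hab. destruct (exists_maximal_separating Hab) as [Q HQmax].
  exists Q. pose proof (fun y z => maximal_separating_prime Q y z HQmax) as Hprime.
  destruct HQmax as [[HQ [Hclosed [Ha Hb]]] _].
  split; [split; [exact HQ | split] | auto].
  - intro Hbot. apply Hb. destruct HQ as [_ [Hup _]]. exact (Hup _ _ Hbot (bot_le A b)).
  - exact Hprime.
Qed.

End ClosedFilterSeparation.

Section PrimeFilterRelation.
Variable A : WDAlgebra.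
Variable P : A -> Prop.
Hypothesis HP : is_prime_filter A P.

Definition larr_rel (x y : A) : Prop := ~ P (larr A x y).

Lemma larr_rel_of_le x y : le A x y -> larr_rel x y.
Proof.
  destruct HP as [[_ [Hup _]] [Hbot _]].
  intros Hle Hxy. exact (Hbot (Hup _ _ Hxy (larr_le_bot A x y Hle))).
Qed.

Lemma larr_rel_trans x y z : larr_rel x y -> larr_rel y z -> larr_rel x z.
Proof.
  destruct HP as [[_ [Hup _]] [_ Hprime]].
  intros Hxy Hyz Hxz.
  destruct (Hprime _ _ (Hup _ _ Hxz (larr_trans A x y z))); auto.
Qed.

Lemma larr_rel_meet_r h w w' :
  larr_rel h w -> larr_rel h w' -> larr_rel h (meet A w w').
Proof.
  destruct HP as [_ [_ Hprime]].
  intros Hw Hw' Hhw. rewrite larr_meet_r in Hhw. destruct (Hprime _ _ Hhw); auto.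
Qed.

Lemma larr_rel_join_l h h' w :
  larr_rel h w -> larr_rel h' w -> larr_rel (join A h h') w.
Proof.
  destruct HP as [_ [_ Hprime]].
  intros Hh Hh' Hhw. rewrite larr_join_l in Hhw. destruct (Hprime _ _ Hhw); auto.
Qed.

Lemma S_rel_of_closed Q : rel_closed A larr_rel Q -> S_rel A P Q.
Proof. intros Hclosed x y Hx Hy. apply NNPP. intro Hxy. exact (Hy (Hclosed x y Hx Hxy)). Qed.

End PrimeFilterRelation.

Theorem corollary3p10 (A : WDAlgebra) (P : A -> Prop) (a b : A) :
  is_prime_filter A P ->
  (P (larr A a b) <->
   exists Q : A -> Prop, is_prime_filter A Q /\ S_rel A P Q /\ Q a /\ ~ Q b).
Proof.
  intro HP. split.
  - intro Hab.
    destruct (closed_prime_filter_separation A (larr_rel A P)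
                (larr_rel_of_le A P HP) (larr_rel_trans A P HP)
                (larr_rel_meet_r A P HP) (larr_rel_join_l A P HP) a b)
      as [Q [HQ [Hclosed [Ha Hb]]]].
    { intro Hnot. exact (Hnot Hab). }
    exists Q. split; [exact HQ | split; [apply S_rel_of_closed, Hclosed | auto]].
  - intros [Q [_ [HS [Ha Hb]]]]. exact (HS a b Ha Hb).
Qed.
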